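(* Let $P:\mathcal C^{op}\to\mathbf{InfSL}$ be an arithmetic doctrine with comprehensive diagonals. Then $P$ satisfies the Countable Axiom of Choice $(\mathrm{AC}_{\mathbf N})$ if and only if its elementary quotient completion $\overline P$ satisfies $(\mathrm{AC}_{\mathbf N})$.
   Context: A doctrine $P$ is arithmetic if it is a weak hyperdoctrine (elementary doctrine over a weakly cartesian closed base, with Heyting fibres, Heyting reindexing, and left and right adjoints to reindexing along product projections satisfying Beck–Chevalley) and $\mathcal C$ has a parameterized natural number object $(\mathbf N,0,s)$ satisfying induction in $P$ (for $\phi\in P(A\times\mathbf N)$, $a\vdash\phi(a,0)$ and $\phi(a,m)\vdash\phi(a,s(m))$ imply $a,n\vdash\phi(a,n)$). Comprehensive diagonals: $f,g:X\to Y$ are equal whenever $\top\vdash f(x)=_Yg(x)$. The Axiom of Choice holds on $A$ if for every $B$ and $R\in P(A\times B)$: $\forall a.\exists b.R(a,b)\vdash\exists f:W.\forall a.R(a,ev(f,a))$ for a weak evaluation $ev:W\times A\to B$; $(\mathrm{AC}_{\mathbf N})$ is the Axiom of Choice on the natural number object (in $\mathcal Q_P$ this is $(\mathbf N,\delta_{\mathbf N})$). The elementary quotient completion $\overline P:\mathcal Q_P^{op}\to\mathbf{InfSL}$ has objects $(A,\rho)$ with $\rho$ a $P$-equivalence relation, arrows equivalence classes of relation-preserving arrows of $\mathcal C$, and $\overline P(A,\rho)=\{\alpha\in P(A)\mid\alpha(a)\wedge\rho(a,a')\vdash\alpha(a')\}$. *)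

Set Implicit Arguments.
Unset Strict Implicit.

Record CCat := {
  ob : Type;
  hom : ob -> ob -> Type;
  comp : forall A B D : ob, hom B D -> hom A B -> hom A D;
  idm : forall A : ob, hom A A;
  comp_assoc : forall A B D E (h : hom D E) (g : hom B D) (f : hom A B),
      comp h (comp g f) = comp (comp h g) f;
  comp_idl : forall A B (f : hom A B), comp (idm B) f = f;
  comp_idr : forall A B (f : hom A B), comp f (idm A) = f;
  term : ob;
  bang : forall A : ob, hom A term;
  bang_uniq : forall A (f : hom A term), f = bang A;
  prod : ob -> ob -> ob;
  pr1 : forall A B : ob, hom (prod A B) A;
  pr2 : forall A B : ob, hom (prod A B) B;
  pair : forall X A B : ob, hom X A -> hom X B -> hom X (prod A B);
  pair_pr1 : forall X A B (f : hom X A) (g : hom X B), comp (pr1 A B) (pair f g) = f;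
  pair_pr2 : forall X A B (f : hom X A) (g : hom X B), comp (pr2 A B) (pair f g) = g;
  pair_uniq : forall X A B (h : hom X (prod A B)),
      h = pair (comp (pr1 A B) h) (comp (pr2 A B) h)
}.

Arguments hom : clear implicits.
Arguments comp {c A B D} _ _.
Arguments idm {c} A.
Arguments term {c}.
Arguments bang {c} A.
Arguments prod {c} _ _.
Arguments pr1 {c A B}.
Arguments pr2 {c A B}.
Arguments pair {c X A B} _ _.

Definition pmap (C : CCat) (A B A' B' : ob C) (f : hom C A A') (g : hom C B B')
  : hom C (prod A B) (prod A' B') := pair (comp f pr1) (comp g pr2).

Definition is_weak_eval (C : CCat) (W A B : ob C) (ev : hom C (prod W A) B) : Prop :=
  forall (X : ob C) (f : hom C (prod X A) B),
    exists g : hom C X W, comp ev (pmap g (idm A)) = f.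

Definition weakly_cc (C : CCat) : Prop :=
  forall A B : ob C, exists (W : ob C) (ev : hom C (prod W A) B), is_weak_eval ev.

Record PNNO (C : CCat) := {
  nat_ob : ob C;
  zero : hom C term nat_ob;
  succ : hom C nat_ob nat_ob;
  pnno_rec : forall (A X : ob C) (a : hom C A X) (h : hom C X X),
      exists! r : hom C (prod A nat_ob) X,
        comp r (pair (idm A) (comp zero (bang A))) = a /\
        comp r (pmap (idm A) succ) = comp h r
}.

(* Doctrines P : C^op -> InfSL.  Each fibre is an inf-semilattice,     *)
(* presented as a preorder with top and binary meets (the poset is the *)
(* quotient by mutual entailment); reindexing is functorial up to that *)
(* equivalence and preserves top and meets.                            *)
Record Doctrine (C : CCat) := {
  P : ob C -> Type;
  le : forall A, P A -> P A -> Prop;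
  le_refl : forall A (a : P A), le a a;
  le_trans : forall A (a b c : P A), le a b -> le b c -> le a c;
  re : forall A B : ob C, hom C A B -> P B -> P A;
  re_mono : forall A B (f : hom C A B) (a b : P B), le a b -> le (re f a) (re f b);
  re_id1 : forall A (a : P A), le (re (idm A) a) a;
  re_id2 : forall A (a : P A), le a (re (idm A) a);
  re_comp1 : forall A B D (f : hom C A B) (g : hom C B D) (a : P D),
      le (re (comp g f) a) (re f (re g a));
  re_comp2 : forall A B D (f : hom C A B) (g : hom C B D) (a : P D),
      le (re f (re g a)) (re (comp g f) a);
  top : forall A, P A;
  meet : forall A, P A -> P A -> P A;
  top_max : forall A (a : P A), le a (top A);
  meet_l : forall A (a b : P A), le (meet a b) a;
  meet_r : forall A (a b : P A), le (meet a b) b;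
  meet_glb : forall A (a b c : P A), le c a -> le c b -> le c (meet a b);
  re_top : forall A B (f : hom C A B), le (top A) (re f (top B));
  re_meet : forall A B (f : hom C A B) (a b : P B),
      le (meet (re f a) (re f b)) (re f (meet a b))
}.

Arguments P {C} d A.
Arguments le {C d A} _ _.
Arguments re {C d A B} _ _.
Arguments top {C d} A.
Arguments meet {C d A} _ _.

Definition eqv (C : CCat) (D : Doctrine C) (A : ob C) (a b : P D A) : Prop :=
  le a b /\ le b a.

Record HeytingQuant (C : CCat) (D : Doctrine C) := {
  bot : forall A, P D A;
  join : forall A, P D A -> P D A -> P D A;
  imp : forall A, P D A -> P D A -> P D A;
  bot_min : forall A (a : P D A), le (bot A) a;
  join_l : forall A (a b : P D A), le a (join a b);
  join_r : forall A (a b : P D A), le b (join a b);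
  join_lub : forall A (a b c : P D A), le a c -> le b c -> le (join a b) c;
  imp_adj : forall A (a b c : P D A), le (meet c a) b <-> le c (imp a b);
  re_bot : forall A B (f : hom C A B), eqv (re f (bot B)) (bot A);
  re_join : forall A B (f : hom C A B) (a b : P D B),
      eqv (re f (join a b)) (join (re f a) (re f b));
  re_imp : forall A B (f : hom C A B) (a b : P D B),
      eqv (re f (imp a b)) (imp (re f a) (re f b));
  ex1 : forall X A : ob C, P D (prod X A) -> P D X;
  all1 : forall X A : ob C, P D (prod X A) -> P D X;
  ex1_adj : forall X A (a : P D (prod X A)) (b : P D X),
      le (ex1 a) b <-> le a (re pr1 b);
  all1_adj : forall X A (a : P D (prod X A)) (b : P D X),
      le b (all1 a) <-> le (re pr1 b) a;
  ex1_BC : forall Y X A (f : hom C Y X) (a : P D (prod X A)),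
      eqv (ex1 (re (pmap f (idm A)) a)) (re f (ex1 a));
  all1_BC : forall Y X A (f : hom C Y X) (a : P D (prod X A)),
      eqv (all1 (re (pmap f (idm A)) a)) (re f (all1 a));
  ex2 : forall X A : ob C, P D (prod X A) -> P D A;
  all2 : forall X A : ob C, P D (prod X A) -> P D A;
  ex2_adj : forall X A (a : P D (prod X A)) (b : P D A),
      le (ex2 a) b <-> le a (re pr2 b);
  all2_adj : forall X A (a : P D (prod X A)) (b : P D A),
      le b (all2 a) <-> le (re pr2 b) a;
  ex2_BC : forall X Y A (g : hom C Y A) (a : P D (prod X A)),
      eqv (ex2 (re (pmap (idm X) g) a)) (re g (ex2 a));
  all2_BC : forall X Y A (g : hom C Y A) (a : P D (prod X A)),
      eqv (all2 (re (pmap (idm X) g) a)) (re g (all2 a))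
}.

Record Elementary (C : CCat) (D : Doctrine C) := {
  delta : forall A : ob C, P D (prod A A);
  delta_adj : forall (X A : ob C) (a : P D (prod X A)) (b : P D (prod (prod X A) A)),
      le (meet (re pr1 a) (re (pair (comp pr2 pr1) pr2) (delta A))) b
      <-> le a (re (pair (idm (prod X A)) pr2) b)
}.
Arguments delta {C D} e A.

(* Weak hyperdoctrine = elementary doctrine over a weakly cartesian     *)
(* closed base with Heyting fibres/reindexing and quantifiers (BC).    *)
Definition weak_hyperdoctrine (C : CCat) (D : Doctrine C)
  (H : HeytingQuant D) (E : Elementary D) : Prop := weakly_cc C.

Definition nno_induction (C : CCat) (D : Doctrine C) (N : PNNO C) : Prop :=
  forall (A : ob C) (phi : P D (prod A (nat_ob N))),
    le (top A) (re (pair (idm A) (comp (zero N) (bang A))) phi) ->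
    le phi (re (pmap (idm A) (succ N)) phi) ->
    le (top _) phi.

Definition arithmetic (C : CCat) (D : Doctrine C) (H : HeytingQuant D)
  (E : Elementary D) (N : PNNO C) : Prop :=
  weak_hyperdoctrine H E /\ nno_induction D N.

Definition comprehensive_diagonals (C : CCat) (D : Doctrine C) (E : Elementary D) : Prop :=
  forall (X Y : ob C) (f g : hom C X Y), le (top X) (re (pair f g) (delta E Y)) -> f = g.

(* A "raw" doctrine: the bare data needed to state the Axiom of Choice, *)
(* with predicates selecting the legitimate objects / arrows / elements *)
(* and an equivalence of arrows (used for the quotient completion, whose *)
(* arrows are equivalence classes).                                     *)
Record RawDoc := {
  rOb : Type;
  okOb : rOb -> Prop;
  rHom : rOb -> rOb -> Type;
  okHom : forall A B, rHom A B -> Prop;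
  heq : forall A B, rHom A B -> rHom A B -> Prop;
  rcomp : forall A B D, rHom B D -> rHom A B -> rHom A D;
  ridm : forall A, rHom A A;
  rone : rOb;
  rprod : rOb -> rOb -> rOb;
  rpr1 : forall A B, rHom (rprod A B) A;
  rpr2 : forall A B, rHom (rprod A B) B;
  rpair : forall X A B, rHom X A -> rHom X B -> rHom X (rprod A B);
  rP : rOb -> Type;
  okP : forall A, rP A -> Prop;
  rle : forall A, rP A -> rP A -> Prop;
  rre : forall A B, rHom A B -> rP B -> rP A
}.
Arguments okHom {r A B} _.
Arguments heq {r A B} _ _.
Arguments rcomp {r A B D} _ _.
Arguments ridm {r} A.
Arguments rone {r}.
Arguments rprod {r} _ _.
Arguments rpr1 {r A B}.
Arguments rpr2 {r A B}.
Arguments rpair {r X A B} _ _.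
Arguments okP {r A} _.
Arguments rle {r A} _ _.
Arguments rre {r A B} _ _.

Definition rpmap (R : RawDoc) (A B A' B' : rOb R) (f : rHom A A') (g : rHom B B')
  : rHom (rprod A B) (rprod A' B') := rpair (rcomp f rpr1) (rcomp g rpr2).

Definition r_weak_eval (R : RawDoc) (W A B : rOb R) (ev : rHom (rprod W A) B) : Prop :=
  forall X : rOb R, okOb X -> forall f : rHom (rprod X A) B, okHom f ->
    exists g : rHom X W, okHom g /\ heq (rcomp ev (rpmap g (ridm A))) f.

Definition is_ex1 (R : RawDoc) (X Y : rOb R) (ex : rP (rprod X Y) -> rP X) : Prop :=
  (forall a, okP a -> okP (ex a)) /\
  forall a b, okP a -> okP b -> (rle (ex a) b <-> rle a (rre rpr1 b)).

Definition is_all1 (R : RawDoc) (X Y : rOb R) (al : rP (rprod X Y) -> rP X) : Prop :=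
  (forall a, okP a -> okP (al a)) /\
  forall a b, okP a -> okP b -> (rle b (al a) <-> rle (rre rpr1 b) a).

(* Axiom of Choice on A (in the empty context, i.e. in the fibre over 1):
     ∀a.∃b.R(a,b) ⊢ ∃f:W.∀a.R(a, ev(f,a))
   for every B, R ∈ P(A×B) and weak evaluation ev : W×A -> B.
   The outer quantifiers ∀a and ∃f are taken along pr1 : 1×A -> 1 and
   pr1 : 1×W -> 1, after reindexing along pr2 : 1×A -> A, pr2 : 1×W -> W. *)
Definition AC_on (R : RawDoc) (A : rOb R) : Prop :=
  forall (B : rOb R), okOb B ->
  forall (Rel : rP (rprod A B)), okP Rel ->
  forall (W : rOb R) (ev : rHom (rprod W A) B), okOb W -> okHom ev -> r_weak_eval ev ->
  forall (exAB : rP (rprod A B) -> rP A) (allOA : rP (rprod rone A) -> rP rone)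
         (allWA : rP (rprod W A) -> rP W) (exOW : rP (rprod rone W) -> rP rone),
    is_ex1 exAB -> is_all1 allOA -> is_all1 allWA -> is_ex1 exOW ->
    rle (allOA (rre rpr2 (exAB Rel)))
        (exOW (rre rpr2 (allWA (rre (rpair rpr2 ev) Rel)))).

Definition rawP (C : CCat) (D : Doctrine C) : RawDoc := {|
  rOb := ob C; okOb := fun _ => True;
  rHom := hom C; okHom := fun _ _ _ => True;
  heq := fun _ _ f g => f = g;
  rcomp := fun _ _ _ g f => comp g f;
  ridm := fun A => idm A;
  rone := term;
  rprod := fun A B => prod A B;
  rpr1 := fun _ _ => pr1; rpr2 := fun _ _ => pr2;
  rpair := fun _ _ _ f g => pair f g;
  rP := P D; okP := fun _ _ => True;
  rle := fun _ a b => le a b;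
  rre := fun _ _ f a => re f a |}.

Definition is_Peqrel (C : CCat) (D : Doctrine C) (A : ob C) (rho : P D (prod A A)) : Prop :=
  le (top A) (re (pair (idm A) (idm A)) rho) /\
  le rho (re (pair pr2 pr1) rho) /\
  le (meet (re pr1 rho) (re (pair (comp pr2 pr1) pr2) rho))
     (re (pair (comp pr1 pr1) pr2) rho).

Definition prod_rel (C : CCat) (D : Doctrine C) (A B : ob C)
  (rho : P D (prod A A)) (sigma : P D (prod B B)) : P D (prod (prod A B) (prod A B)) :=
  meet (re (pair (comp pr1 pr1) (comp pr1 pr2)) rho)
       (re (pair (comp pr2 pr1) (comp pr2 pr2)) sigma).

Definition QOb (C : CCat) (D : Doctrine C) := { A : ob C & P D (prod A A) }.

(* Objects of Q_P: (A, ρ) with ρ a P-equivalence relation.  Arrows: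
   arrows f of C with ρ ⊢ σ(f×f), identified when ρ ⊢ σ(f×g).
   Fibres: P̄(A,ρ) = { α ∈ P(A) | α(a) ∧ ρ(a,a') ⊢ α(a') }. *)
Definition rawPbar (C : CCat) (D : Doctrine C) (E : Elementary D) : RawDoc := {|
  rOb := QOb D;
  okOb := fun X => is_Peqrel (projT2 X);
  rHom := fun X Y => hom C (projT1 X) (projT1 Y);
  okHom := fun X Y f => le (projT2 X) (re (pmap f f) (projT2 Y));
  heq := fun X Y f g => le (projT2 X) (re (pmap f g) (projT2 Y));
  rcomp := fun _ _ _ g f => comp g f;
  ridm := fun X => idm (projT1 X);
  rone := existT _ term (delta E term);
  rprod := fun X Y => existT _ (prod (projT1 X) (projT1 Y)) (prod_rel (projT2 X) (projT2 Y));
  rpr1 := fun _ _ => pr1; rpr2 := fun _ _ => pr2;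
  rpair := fun _ _ _ f g => pair f g;
  rP := fun X => P D (projT1 X);
  okP := fun X a => le (meet (re pr1 a) (projT2 X)) (re pr2 a);
  rle := fun _ a b => le a b;
  rre := fun _ _ f a => re f a |}.

(* (AC_N) for P, and for P̄ (natural number object (N, δ_N) of Q_P). *)
Definition AC_N (C : CCat) (D : Doctrine C) (N : PNNO C) : Prop :=
  AC_on (R := rawP D) (nat_ob N).

Definition AC_N_bar (C : CCat) (D : Doctrine C) (E : Elementary D) (N : PNNO C) : Prop :=
  AC_on (R := rawPbar E) (existT _ (nat_ob N) (delta E (nat_ob N))).

(* A relation of the completion over (A, δ_A) × (B, σ) is a relation of P stable under δ_A ⊠ σ,
   and on stable predicates the quantifiers of the completion agree with those of P.  Hence AC for P
   on A gives AC for the completion on (A, δ_A): apply AC in P with a weak evaluation W' × A → B of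
   the base, then factor W' through the given weak evaluation W × A → B of Q_P up to σ.  Conversely,
   a weak evaluation ev : W × A → B of the base becomes one of Q_P from (W, ≈) × (A, δ_A) to
   (B, δ_B), where w ≈ w' is the extensional equality ∀a. ev(w, a) = ev(w', a); every quantifier of P
   is then one of the completion, so AC for the completion on (A, δ_A) gives AC for P on A. *)

From Stdlib Require Import Setoid Morphisms RelationClasses.
Set Implicit Arguments.
Unset Strict Implicit.

Section Cartesian.
Variable C : CCat.

Lemma comp_pair (X Y A B : ob C) (f : hom C Y A) (g : hom C Y B) (h : hom C X Y) :
  comp (pair f g) h = pair (comp f h) (comp g h).
Proof.
  rewrite (pair_uniq (comp (pair f g) h)), !comp_assoc, pair_pr1, pair_pr2.
  reflexivity.
Qed.

Lemma comp_pr1_pair (X Y A B : ob C) (f : hom C Y A) (g : hom C Y B) (h : hom C X Y) :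
  comp pr1 (comp (pair f g) h) = comp f h.
Proof. rewrite comp_assoc, pair_pr1; reflexivity. Qed.

Lemma comp_pr2_pair (X Y A B : ob C) (f : hom C Y A) (g : hom C Y B) (h : hom C X Y) :
  comp pr2 (comp (pair f g) h) = comp g h.
Proof. rewrite comp_assoc, pair_pr2; reflexivity. Qed.

Lemma pair_eta (X A B : ob C) (h : hom C X (prod A B)) : pair (comp pr1 h) (comp pr2 h) = h.
Proof. symmetry; apply pair_uniq. Qed.

Lemma pair_pr1_pr2 (A B : ob C) : pair (@pr1 C A B) pr2 = idm (prod A B).
Proof. rewrite (pair_uniq (idm _)), !comp_idr; reflexivity. Qed.

Lemma bang_comp (X Y : ob C) (f : hom C X Y) : comp (bang Y) f = bang X.
Proof. apply bang_uniq. Qed.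

End Cartesian.

Ltac cat_simpl :=
  unfold pmap;
  repeat progress rewrite ?comp_pair, ?pair_pr1, ?pair_pr2, ?comp_pr1_pair, ?comp_pr2_pair,
    ?comp_idl, ?comp_idr, ?pair_pr1_pr2, ?pair_eta, ?bang_comp, <- ?comp_assoc.

Section Fibres.
Variables (C : CCat) (D : Doctrine C).

#[global] Instance le_preorder (A : ob C) : PreOrder (@le C D A).
Proof. split; [intro; apply le_refl | intros ???; apply le_trans]. Qed.

#[global] Instance eqv_equivalence (A : ob C) : Equivalence (@eqv C D A).
Proof.
  split; unfold eqv.
  - split; reflexivity.
  - intros ?? []; split; assumption.
  - intros ??? [] []; split; etransitivity; eassumption.
Qed.

#[global] Instance le_eqv_proper (A : ob C) : Proper (@eqv C D A ==> @eqv C D A ==> iff) (@le C D A).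
Proof. intros ?? [] ?? []; split; intro; repeat (etransitivity; eauto). Qed.

#[global] Instance re_le_proper (A B : ob C) (f : hom C A B) : Proper (@le C D B ==> @le C D A) (@re C D A B f).
Proof. intros ???; apply re_mono; assumption. Qed.

#[global] Instance re_eqv_proper (A B : ob C) (f : hom C A B) : Proper (@eqv C D B ==> @eqv C D A) (@re C D A B f).
Proof. intros ?? []; split; apply re_mono; assumption. Qed.

Lemma meet_mono (A : ob C) (a a' b b' : P D A) : le a a' -> le b b' -> le (meet a b) (meet a' b').
Proof.
  intros; apply meet_glb; [rewrite meet_l | rewrite meet_r]; assumption.
Qed.

#[global] Instance meet_le_proper (A : ob C) : Proper (@le C D A ==> @le C D A ==> @le C D A) (@meet C D A).
Proof. intros ?????; apply meet_mono; assumption. Qed.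

#[global] Instance meet_eqv_proper (A : ob C) : Proper (@eqv C D A ==> @eqv C D A ==> @eqv C D A) (@meet C D A).
Proof. intros ?? [] ?? []; split; apply meet_mono; assumption. Qed.

Lemma re_comp (A B B' : ob C) (f : hom C A B) (g : hom C B B') (a : P D B') :
  eqv (re f (re g a)) (re (comp g f) a).
Proof. split; [apply re_comp2 | apply re_comp1]. Qed.

Lemma re_idm (A : ob C) (a : P D A) : eqv (re (idm A) a) a.
Proof. split; [apply re_id1 | apply re_id2]. Qed.

Lemma re_meetE (A B : ob C) (f : hom C A B) (a b : P D B) :
  eqv (re f (meet a b)) (meet (re f a) (re f b)).
Proof. split; [apply meet_glb; apply re_mono; [apply meet_l | apply meet_r] | apply re_meet]. Qed.

Lemma re_topE (A B : ob C) (f : hom C A B) : eqv (re f (@top C D B)) (top A).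
Proof. split; [apply top_max | apply re_top]. Qed.

Lemma le_top_re (A B : ob C) (f : hom C A B) (b : P D B) : le (top B) b -> le (top A) (re f b).
Proof. intro h; rewrite <- h, re_topE; reflexivity. Qed.

Lemma le_from_top (A : ob C) (a b : P D A) : le (top A) b -> le a b.
Proof. intro h; rewrite <- h; apply top_max. Qed.

Lemma meet_top_l (A : ob C) (a b : P D A) : le (top A) a -> le b (meet a b).
Proof. intro h; apply meet_glb; [rewrite <- h; apply top_max | reflexivity]. Qed.

End Fibres.

Ltac re_simpl := repeat rewrite ?re_comp, ?re_meetE; cat_simpl; rewrite ?re_idm.

Section Relations.
Variables (C : CCat) (D : Doctrine C).

Definition Preflexive (A : ob C) (rho : P D (prod A A)) : Prop :=
  le (top A) (re (pair (idm A) (idm A)) rho).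

Lemma Preflexive_at (A : ob C) (rho : P D (prod A A)) (X : ob C) (a : hom C X A) :
  Preflexive rho -> le (top X) (re (pair a a) rho).
Proof.
  intro r; rewrite (le_top_re a r); re_simpl; reflexivity.
Qed.

Lemma Peqrel_sym_at (A : ob C) (rho : P D (prod A A)) (X : ob C) (a b : hom C X A) :
  is_Peqrel rho -> le (re (pair a b) rho) (re (pair b a) rho).
Proof.
  intros [_ [s _]]; rewrite s at 1; re_simpl; reflexivity.
Qed.

Lemma Peqrel_trans_at (A : ob C) (rho : P D (prod A A)) (X : ob C) (a b c : hom C X A) :
  is_Peqrel rho -> le (meet (re (pair a b) rho) (re (pair b c) rho)) (re (pair a c) rho).
Proof.
  intros [_ [_ t]].
  transitivity (re (pair (pair a b) c) (meet (re pr1 rho) (re (pair (comp pr2 pr1) pr2) rho))).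
  - re_simpl; reflexivity.
  - rewrite t; re_simpl; reflexivity.
Qed.

Definition descends (A : ob C) (rho : P D (prod A A)) (a : P D A) : Prop :=
  le (meet (re pr1 a) rho) (re pr2 a).

#[global] Instance descends_eqv_proper (A : ob C) (rho : P D (prod A A)) :
  Proper (@eqv C D A ==> iff) (descends rho).
Proof. intros ?? e; unfold descends; rewrite e; reflexivity. Qed.

Lemma descends_at (A : ob C) (rho : P D (prod A A)) (a : P D A) (X : ob C) (x y : hom C X A) :
  descends rho a -> le (meet (re x a) (re (pair x y) rho)) (re y a).
Proof.
  intro h; transitivity (re (pair x y) (meet (re pr1 a) rho)).
  - re_simpl; reflexivity.
  - rewrite h; re_simpl; reflexivity.
Qed.

Lemma descends_mono (A : ob C) (rho rho' : P D (prod A A)) (a : P D A) :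
  le rho rho' -> descends rho' a -> descends rho a.
Proof. unfold descends; intros hr ha; rewrite hr; exact ha. Qed.

Lemma descends_re (X Y : ob C) (rX : P D (prod X X)) (rY : P D (prod Y Y)) (h : hom C Y X) (a : P D X) :
  le rY (re (pmap h h) rX) -> descends rX a -> descends rY (re h a).
Proof.
  unfold descends; intros hr ha; rewrite hr.
  transitivity (re (pmap h h) (meet (re pr1 a) rX)).
  - re_simpl; reflexivity.
  - rewrite ha; re_simpl; reflexivity.
Qed.

Lemma descends_pr2 (X Y : ob C) (rX : P D (prod X X)) (rY : P D (prod Y Y)) (a : P D Y) :
  descends rY a -> descends (prod_rel rX rY) (re (@pr2 C X Y) a).
Proof. apply descends_re; unfold prod_rel; re_simpl; apply meet_r. Qed.

End Relations.

Section Equality.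
Variables (C : CCat) (D : Doctrine C) (E : Elementary D).

Lemma delta_subst (G A : ob C) (a : P D (prod G A)) :
  le (meet (re pr1 a) (re (pair (comp pr2 pr1) pr2) (delta E A))) (re (pair (comp pr1 pr1) pr2) a).
Proof. apply (delta_adj E); re_simpl; reflexivity. Qed.

Lemma delta_subst_at (G A X : ob C) (a : P D (prod G A)) (g : hom C X G) (x y : hom C X A) :
  le (meet (re (pair g x) a) (re (pair x y) (delta E A))) (re (pair g y) a).
Proof.
  transitivity (re (pair (pair g x) y) (meet (re pr1 a) (re (pair (comp pr2 pr1) pr2) (delta E A)))).
  - re_simpl; reflexivity.
  - rewrite delta_subst; re_simpl; reflexivity.
Qed.

Lemma delta_refl (A : ob C) : Preflexive (delta E A).
Proof.
  assert (eta : le (top (prod term A)) (re (pair (idm _) pr2)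
      (meet (re pr1 (top _)) (re (pair (comp pr2 pr1) pr2) (delta E A))))).
  { apply (delta_adj E); reflexivity. }
  rewrite meet_r in eta.
  unfold Preflexive; rewrite (le_top_re (pair (bang A) (idm A)) eta); re_simpl; reflexivity.
Qed.

Lemma delta_least (A : ob C) (rho : P D (prod A A)) : Preflexive rho -> le (delta E A) rho.
Proof.
  intro r.
  transitivity (meet (re (pair pr1 pr1) rho) (re (pair pr1 pr2) (delta E A))).
  - apply meet_glb; [apply le_from_top, (Preflexive_at pr1 r) | re_simpl; reflexivity].
  - rewrite delta_subst_at; re_simpl; reflexivity.
Qed.

Lemma delta_Peqrel (A : ob C) : is_Peqrel (delta E A).
Proof.
  split; [apply delta_refl | split; [| apply delta_subst]].
  apply delta_least; unfold Preflexive; re_simpl; apply delta_refl.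
Qed.

Lemma descends_delta (A : ob C) (a : P D A) : descends (delta E A) a.
Proof.
  pose proof (delta_subst_at (re pr2 a) (bang _) pr1 pr2) as h.
  revert h; unfold descends; re_simpl; auto.
Qed.

Lemma delta_cong_at (G A B X : ob C) (f : hom C (prod G A) B) (c : hom C X G) (x y : hom C X A) :
  le (re (pair x y) (delta E A)) (re (pair (comp f (pair c x)) (comp f (pair c y))) (delta E B)).
Proof.
  set (fx_eq_f := re (pair (comp f (pair (comp c pr1) (comp x pr1))) (comp f (pair (comp c pr1) pr2)))
                     (delta E B)).
  transitivity (meet (re (pair (idm X) x) fx_eq_f) (re (pair x y) (delta E A))).
  - apply meet_top_l; unfold fx_eq_f; re_simpl; apply Preflexive_at, delta_refl.
  - rewrite delta_subst_at; unfold fx_eq_f; re_simpl; reflexivity.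
Qed.

Lemma prod_rel_delta (A B : ob C) : le (prod_rel (delta E A) (delta E B)) (delta E (prod A B)).
Proof.
  unfold prod_rel.
  rewrite (meet_mono (delta_cong_at (pair pr2 pr1) (comp pr2 pr1) _ _)
                     (delta_cong_at (idm _) (comp pr1 pr2) _ _)).
  re_simpl; rewrite Peqrel_trans_at by apply delta_Peqrel; re_simpl; reflexivity.
Qed.

End Equality.

Section Quantifiers.
Variables (C : CCat) (D : Doctrine C) (H : HeytingQuant D).

Lemma all1_counit (X A : ob C) (a : P D (prod X A)) : le (re pr1 (all1 H a)) a.
Proof. apply (all1_adj H); reflexivity. Qed.

Lemma ex1_unit (X A : ob C) (a : P D (prod X A)) : le a (re pr1 (ex1 H a)).
Proof. apply (ex1_adj H); reflexivity. Qed.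

Lemma all1_mono (X A : ob C) (a b : P D (prod X A)) : le a b -> le (all1 H a) (all1 H b).
Proof. intro h; apply (all1_adj H); rewrite <- h; apply all1_counit. Qed.

Lemma ex1_mono (X A : ob C) (a b : P D (prod X A)) : le a b -> le (ex1 H a) (ex1 H b).
Proof. intro h; apply (ex1_adj H); rewrite h; apply ex1_unit. Qed.

#[global] Instance all1_eqv_proper (X A : ob C) :
  Proper (@eqv C D (prod X A) ==> @eqv C D X) (@all1 C D H X A).
Proof. intros ?? []; split; apply all1_mono; assumption. Qed.

#[global] Instance ex1_eqv_proper (X A : ob C) :
  Proper (@eqv C D (prod X A) ==> @eqv C D X) (@ex1 C D H X A).
Proof. intros ?? []; split; apply ex1_mono; assumption. Qed.

Lemma all1_counit_at (X A Y : ob C) (a : P D (prod X A)) (k : hom C Y X) (n : hom C Y A) :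
  le (re k (all1 H a)) (re (pair k n) a).
Proof.
  transitivity (re (pair k n) (re pr1 (all1 H a))).
  - re_simpl; reflexivity.
  - apply re_mono, all1_counit.
Qed.

Lemma ex1_le_reindex (X Y Y' : ob C) (g : hom C Y' Y) (b : P D (prod X Y')) (c : P D (prod X Y)) :
  le b (re (pmap (idm X) g) c) -> le (ex1 H b) (ex1 H c).
Proof.
  intro h; apply (ex1_adj H); rewrite h, (ex1_unit c) at 1; re_simpl; reflexivity.
Qed.

Lemma rawP_all1_eqv (X A : ob C) (al : P D (prod X A) -> P D X) (a : P D (prod X A)) :
  is_all1 (R := rawP D) al -> eqv (al a) (all1 H a).
Proof.
  intros [_ adj]; cbn in adj; split.
  - apply (all1_adj H), (adj _ _ I I); reflexivity.
  - apply (adj _ _ I I), all1_counit.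
Qed.

Lemma descends_all1 (W A : ob C) (om : P D (prod W W)) (rA : P D (prod A A)) (a : P D (prod W A)) :
  Preflexive rA -> descends (prod_rel om rA) a -> descends om (all1 H a).
Proof.
  unfold descends; intros hr ha.
  rewrite <- (all1_BC H (pr2 (A := W) (B := W)) a); apply (all1_adj H).
  transitivity (meet (re (pair (comp pr1 pr1) pr2) a)
                     (re (pair (pair (comp pr1 pr1) pr2) (pair (comp pr2 pr1) pr2)) (prod_rel om rA))).
  - unfold prod_rel; re_simpl; apply meet_glb.
    + rewrite meet_l; apply all1_counit_at.
    + apply meet_glb; [apply meet_r | apply le_from_top, (Preflexive_at pr2 hr)].
  - rewrite (descends_at _ _ ha); re_simpl; reflexivity.
Qed.

Lemma AC_on_P_quantifiers (A B W : ob C) (Rel : P D (prod A B)) (ev : hom C (prod W A) B) :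
  AC_on (R := rawP D) A -> is_weak_eval ev ->
  le (all1 H (re (@pr2 C term A) (ex1 H Rel)))
     (ex1 H (re (@pr2 C term W) (all1 H (re (pair pr2 ev) Rel)))).
Proof.
  intros hAC hev.
  apply (hAC B I Rel I W ev I I).
  - intros X _ f _; destruct (hev X f) as [g hg]; exists g; split; [exact I | exact hg].
  - split; [intros; exact I | intros; apply (ex1_adj H)].
  - split; [intros; exact I | intros; apply (all1_adj H)].
  - split; [intros; exact I | intros; apply (all1_adj H)].
  - split; [intros; exact I | intros; apply (ex1_adj H)].
Qed.

End Quantifiers.

Section Completion.
Variables (C : CCat) (D : Doctrine C) (E : Elementary D) (H : HeytingQuant D).

Lemma Pbar_ex1_eqv (X Y : ob C) (rX : P D (prod X X)) (rY : P D (prod Y Y))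
  (ex : P D (prod X Y) -> P D X) (a : P D (prod X Y)) :
  is_ex1 (R := rawPbar E) (X := existT _ X rX) (Y := existT _ Y rY) ex ->
  descends (prod_rel rX rY) a -> descends rX (ex1 H a) -> eqv (ex a) (ex1 H a).
Proof.
  intros [ok adj] ha hex; cbn in ok, adj; split.
  - apply (adj _ _ ha hex), ex1_unit.
  - apply (ex1_adj H), (adj _ _ ha (ok _ ha)); reflexivity.
Qed.

Lemma Pbar_all1_eqv (X Y : ob C) (rX : P D (prod X X)) (rY : P D (prod Y Y))
  (al : P D (prod X Y) -> P D X) (a : P D (prod X Y)) :
  is_all1 (R := rawPbar E) (X := existT _ X rX) (Y := existT _ Y rY) al ->
  Preflexive rY -> descends (prod_rel rX rY) a -> eqv (al a) (all1 H a).
Proof.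
  intros [ok adj] hr ha; cbn in ok, adj; split.
  - apply (all1_adj H), (adj _ _ ha (ok _ ha)); reflexivity.
  - apply (adj _ _ ha (descends_all1 H hr ha)), all1_counit.
Qed.

Lemma is_ex1_Pbar (X Y : ob C) (rY : P D (prod Y Y)) (ex : P D (prod X Y) -> P D X) :
  is_ex1 (R := rawP D) ex ->
  is_ex1 (R := rawPbar E) (X := existT _ X (delta E X)) (Y := existT _ Y rY) ex.
Proof.
  intros [_ adj]; split; intros; [apply descends_delta | apply (adj _ _ I I)].
Qed.

Lemma is_all1_Pbar (X Y : ob C) (rX : P D (prod X X)) (rY : P D (prod Y Y))
  (al : P D (prod X Y) -> P D X) :
  Preflexive rY -> is_all1 (R := rawP D) al ->
  is_all1 (R := rawPbar E) (X := existT _ X rX) (Y := existT _ Y rY) al.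
Proof.
  intros hr hal; split.
  - intros a ha; cbn; change (descends rX (al a)).
    rewrite (rawP_all1_eqv H a hal); exact (descends_all1 H hr ha).
  - intros a b _ _; apply (proj2 hal _ _ I I).
Qed.

Lemma Pbar_weak_eval_factor (W A B : ob C) (om : P D (prod W W)) (sg : P D (prod B B))
  (ev : hom C (prod W A) B) :
  Preflexive sg ->
  r_weak_eval (R := rawPbar E) (W := existT _ W om) (A := existT _ A (delta E A))
    (B := existT _ B sg) ev ->
  forall (X : ob C) (f : hom C (prod X A) B),
  exists g : hom C X W, le (top _) (re (pair (comp ev (pmap g (idm A))) f) sg).
Proof.
  intros hr hev X f.
  assert (hf : le (prod_rel (delta E X) (delta E A)) (re (pmap f f) sg)).
  { rewrite prod_rel_delta; apply delta_least; unfold Preflexive; re_simpl; apply Preflexive_at, hr. }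
  destruct (hev (existT _ X (delta E X)) (delta_Peqrel E X) f hf) as [g [_ hg]]; cbn in hg.
  exists g.
  transitivity (re (pair (idm _) (idm _)) (prod_rel (delta E X) (delta E A))).
  - unfold prod_rel; re_simpl; apply meet_glb; apply Preflexive_at, delta_refl.
  - rewrite hg; re_simpl; reflexivity.
Qed.

End Completion.

Section ExtensionalEquality.
Variables (C : CCat) (D : Doctrine C) (E : Elementary D) (H : HeytingQuant D).
Variables (W A B : ob C) (ev : hom C (prod W A) B).

Definition ext_eq : P D (prod W W) :=
  all1 H (re (pair (comp ev (pair (comp pr1 pr1) pr2)) (comp ev (pair (comp pr2 pr1) pr2)))
             (delta E B)).

Lemma ext_eq_Peqrel : is_Peqrel ext_eq.
Proof.
  unfold ext_eq; split; [| split].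
  - unfold Preflexive; rewrite <- all1_BC; apply (all1_adj H).
    re_simpl; apply le_from_top, Preflexive_at, delta_refl.
  - rewrite <- all1_BC; apply (all1_adj H).
    rewrite all1_counit; re_simpl; apply Peqrel_sym_at, delta_Peqrel.
  - rewrite <- (all1_BC H (pair (comp pr1 pr1) pr2)); apply (all1_adj H); re_simpl.
    rewrite (meet_mono (all1_counit_at H _ _ pr2) (all1_counit_at H _ _ pr2)); re_simpl.
    apply Peqrel_trans_at, delta_Peqrel.
Qed.

Lemma ext_eq_ev : le (prod_rel ext_eq (delta E A)) (re (pmap ev ev) (delta E B)).
Proof.
  unfold prod_rel, ext_eq.
  rewrite (meet_mono (all1_counit_at H _ _ (comp pr2 pr1))
                     (delta_cong_at E ev (comp pr1 pr2) (comp pr2 pr1) (comp pr2 pr2))).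
  re_simpl; rewrite Peqrel_trans_at by apply delta_Peqrel; re_simpl; reflexivity.
Qed.

Lemma Pbar_weak_eval_ext_eq :
  r_weak_eval (R := rawP D) ev ->
  r_weak_eval (R := rawPbar E) (W := existT _ W ext_eq) (A := existT _ A (delta E A))
    (B := existT _ B (delta E B)) ev.
Proof.
  intros hev [X rho] _ f hf; cbn in *.
  destruct (hev X I f I) as [g [_ hg]]; cbn in hg; subst f.
  exists g; split; [| exact hf].
  unfold ext_eq; rewrite <- (all1_BC H (pmap g g)); apply (all1_adj H).
  transitivity (re (pair (pair (comp pr1 pr1) pr2) (pair (comp pr2 pr1) pr2))
                   (prod_rel rho (delta E A))).
  - unfold prod_rel; re_simpl; apply meet_glb;
      [reflexivity | apply le_from_top, Preflexive_at, delta_refl].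
  - rewrite hf; re_simpl; reflexivity.
Qed.

End ExtensionalEquality.

Section Transfer.
Variables (C : CCat) (D : Doctrine C) (E : Elementary D) (H : HeytingQuant D).

Lemma AC_on_of_AC_on_Pbar (A : ob C) :
  AC_on (R := rawPbar E) (existT _ A (delta E A)) -> AC_on (R := rawP D) A.
Proof.
  intros hAC B _ Rel _ W ev _ _ hev exAB allOA allWA exOW hexAB hallOA hallWA hexOW.
  apply (hAC (existT _ B (delta E B)) (delta_Peqrel E B) Rel
           (descends_mono (prod_rel_delta E A B) (descends_delta E Rel))
           (existT _ W (ext_eq E H ev)) ev (ext_eq_Peqrel E H ev) (ext_eq_ev E H ev)
           (Pbar_weak_eval_ext_eq H hev)).
  - apply is_ex1_Pbar, hexAB.
  - apply (is_all1_Pbar E H); [apply delta_refl | exact hallOA].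
  - apply (is_all1_Pbar E H); [apply delta_refl | exact hallWA].
  - apply is_ex1_Pbar, hexOW.
Qed.

Lemma AC_on_Pbar_of_AC_on (A : ob C) :
  weakly_cc C -> AC_on (R := rawP D) A -> AC_on (R := rawPbar E) (existT _ A (delta E A)).
Proof.
  intros hwcc hAC [B sg] hsg Rel hRel [W om] ev _ hev_ok hev exAB allOA allWA exOW
         hexAB hallOA hallWA hexOW.
  cbn in *.
  destruct (hwcc A B) as [W' [ev' hev']].
  destruct (Pbar_weak_eval_factor (proj1 hsg) hev ev') as [g hg].
  set (Z := re (pair pr2 ev) Rel).
  assert (hZ : descends (prod_rel om (delta E A)) Z).
  { apply (descends_re (rX := prod_rel (delta E A) sg)); [| exact hRel].
    unfold prod_rel; re_simpl; apply meet_glb; [apply meet_r | rewrite hev_ok; re_simpl; reflexivity]. }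
  assert (hstep : le (all1 H (re (pair pr2 ev') Rel)) (re g (all1 H Z))).
  { rewrite <- (all1_BC H g Z); apply all1_mono; unfold Z; re_simpl.
    transitivity (meet (re (pair pr2 ev') Rel)
                       (re (pair (pair pr2 ev') (pair pr2 (comp ev (pair (comp g pr1) pr2))))
                           (prod_rel (delta E A) sg))).
    - apply meet_glb; [reflexivity | apply le_from_top].
      unfold prod_rel; re_simpl; apply meet_glb.
      + apply Preflexive_at, delta_refl.
      + rewrite hg at 1; cat_simpl; apply Peqrel_sym_at, hsg.
    - rewrite (descends_at _ _ hRel); re_simpl; reflexivity. }
  rewrite (Pbar_all1_eqv H hallOA (delta_refl E A) (descends_pr2 _ (proj1 hexAB Rel hRel))).
  rewrite (Pbar_ex1_eqv (H := H) hexAB hRel (descends_delta E _)).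
  rewrite (Pbar_ex1_eqv (H := H) hexOW (descends_pr2 _ (proj1 hallWA Z hZ)) (descends_delta E _)).
  rewrite (Pbar_all1_eqv H hallWA (delta_refl E A) hZ).
  rewrite (AC_on_P_quantifiers H Rel hAC hev').
  apply (ex1_le_reindex H (g := g)); rewrite hstep; re_simpl; reflexivity.
Qed.

End Transfer.

Theorem corollary3p13 (C : CCat) (D : Doctrine C) (H : HeytingQuant D)
  (E : Elementary D) (N : PNNO C) :
  arithmetic H E N ->
  comprehensive_diagonals E ->
  (AC_N D N <-> AC_N_bar E N).
Proof.
  intros [hwcc _] _.
  split; [apply (AC_on_Pbar_of_AC_on H), hwcc | apply (AC_on_of_AC_on_Pbar H)].
Qed.
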